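(* Let $R>0$ and let $E\subset\mathbb{R}^d$ be an $R$-supported body. Then $$\bigcap_{a\in\partial E} C^a_{\mathcal{N}_R(E,a)}=(\partial E_R)'_R .$$
   Context: A body is a nonempty closed subset of $\mathbb{R}^d$; $S^{d-1}$ is the unit sphere; $B(x)=\{y:|y-x|<R\}$. For $A\subset\mathbb{R}^d$, $A_R=\{x:\operatorname{dist}(x,A)<R\}$ and $A'_R=\{x:\operatorname{dist}(x,A)\ge R\}$ (with $\emptyset'_R=\mathbb{R}^d$). For a body $A$ and $a\in\partial A$, $\mathcal{N}_R(A,a)=\{v\in S^{d-1}: A\cap B(a+Rv)=\emptyset\}$; $A$ is $R$-supported if $\mathcal{N}_R(A,a)\ne\emptyset$ for all $a\in\partial A$. For a nonempty closed $\mathcal K\subset S^{d-1}$ and $x\in\mathbb{R}^d$, the $R$-cone with vertex $x$ is $C^x_{\mathcal K}=\bigcap_{v\in\mathcal K}(\mathbb{R}^d\setminus B(x+Rv))$, and $C_{\mathcal K}=C^o_{\mathcal K}$. An intersection over an empty index set is $\mathbb{R}^d$. *)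

(* R^d is modelled as 'rV[R]_d with its standard
   (product = Euclidean) topology; metric notions use the Euclidean norm. *)
From mathcomp Require Import all_boot all_order all_algebra.
From mathcomp Require Import all_classical all_reals all_analysis.
Set Implicit Arguments. Unset Strict Implicit. Unset Printing Implicit Defensive.
Import Order.TTheory GRing.Theory Num.Theory.
Import numFieldNormedType.Exports.
Local Open Scope classical_set_scope.
Local Open Scope ring_scope.

Section Defs.
Variables (R : realType) (d : nat).
Local Notation V := 'rV[R]_d.

Definition enorm (x : V) : R := Num.sqrt (\sum_(i < d) (x ord0 i) ^+ 2).

Definition eball (r : R) (x : V) : set V := [set y | enorm (y - x) < r].

Definition sphere : set V := [set v | enorm v = 1].

Definition body (A : set V) : Prop := A !=set0 /\ closed A.

Definition bdry (A : set V) : set V := closure A `\` interior A.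

(* A_r = {x : dist(x,A) < r}  (dist(x,A) = inf_{a in A} |x - a|, = +oo if A empty) *)
Definition nbhd_lt (r : R) (A : set V) : set V :=
  [set x | exists2 a, A a & enorm (x - a) < r].

(* A'_r = {x : dist(x,A) >= r}, with (emptyset)'_r = R^d *)
Definition nbhd_ge (r : R) (A : set V) : set V :=
  [set x | forall a, A a -> r <= enorm (x - a)].

Definition normals (r : R) (A : set V) (a : V) : set V :=
  [set v | sphere v /\ A `&` eball r (a + r *: v) = set0].

Definition supported (r : R) (A : set V) : Prop :=
  forall a, bdry A a -> normals r A a !=set0.

Definition rcone (r : R) (K : set V) (x : V) : set V :=
  \bigcap_(v in K) ~` eball r (x + r *: v).

End Defs.

From mathcomp Require Import all_boot all_order all_algebra.
From mathcomp Require Import all_classical all_reals all_analysis.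
From mathcomp Require Import ring lra.
Import Order.TTheory GRing.Theory Num.Theory.
Import numFieldNormedType.Exports.
Local Open Scope classical_set_scope.
Local Open Scope ring_scope.
Set Implicit Arguments. Unset Strict Implicit.

(* The points [a + R v] with [a] in the boundary of [E] and [v] an [R]-normal at [a]
   are exactly the boundary points of [E_R].  Indeed such a point is at distance [>= R]
   from [E] and is the limit of the points [a + t v], [t < R], of [E_R].  Conversely, a
   boundary point [y] of the open set [E_R] satisfies [dist(y, E) = R]; a nearest point
   [c] of the closed set [E] is then a boundary point of [E], and [(y - c) / R] is an
   [R]-normal at [c].  The intersection of the cones is the set of points at distance
   [>= R] from all the [a + R v], i.e. [(bdry E_R)'_R]. *)

Section EuclideanNorm.
Variables (R : realType) (d : nat).
Implicit Types (x y z : 'rV[R]_d) (t : R).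

Lemma enorm_ge0 x : 0 <= enorm x.
Proof. exact: sqrtr_ge0. Qed.

Lemma sqr_enorm x : enorm x ^+ 2 = \sum_(i < d) x ord0 i ^+ 2.
Proof. by rewrite sqr_sqrtr // sumr_ge0 // => i _; rewrite sqr_ge0. Qed.

Lemma enormZ t x : enorm (t *: x) = `|t| * enorm x.
Proof.
rewrite /enorm (eq_bigr (fun i => t ^+ 2 * x ord0 i ^+ 2)); last first.
  by move=> i _; rewrite mxE exprMn.
by rewrite -mulr_sumr sqrtrM ?sqr_ge0 // sqrtr_sqr.
Qed.

Lemma enormN x : enorm (- x) = enorm x.
Proof. by rewrite -scaleN1r enormZ normrN normr1 mul1r. Qed.

Lemma enorm_distC x y : enorm (x - y) = enorm (y - x).
Proof. by rewrite -enormN opprB. Qed.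

Lemma enorm0_coord x i : enorm x = 0 -> x ord0 i = 0.
Proof.
move=> x0; have : \sum_(j < d) x ord0 j ^+ 2 = 0 by rewrite -sqr_enorm x0 expr0n.
move/psumr_eq0P => /(_ (fun j _ => sqr_ge0 _) i isT) /eqP.
by rewrite sqrf_eq0 => /eqP.
Qed.

Lemma enorm_CauchySchwarz x y :
  \sum_(i < d) x ord0 i * y ord0 i <= enorm x * enorm y.
Proof.
set A := enorm x; set B := enorm y.
have [AB0|AB_neq0] := eqVneq (A * B) 0.
  rewrite AB0 big1 // => i _.
  by have /orP[/eqP/enorm0_coord -> | /eqP/enorm0_coord ->] : (A == 0) || (B == 0);
    rewrite -?mulf_eq0 ?AB0 ?mul0r ?mulr0.
have AB_gt0 : 0 < A * B by rewrite lt0r AB_neq0 mulr_ge0 ?enorm_ge0.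
(* Summing [2 a b A B <= a^2 B^2 + b^2 A^2] over the coordinates. *)
suff : 2 * (A * B) * \sum_(i < d) x ord0 i * y ord0 i <= 2 * (A * B) * (A * B).
  by rewrite ler_pM2l // mulr_gt0.
rewrite mulr_sumr; apply: (@le_trans _ _
  (\sum_(i < d) (x ord0 i ^+ 2 * B ^+ 2 + y ord0 i ^+ 2 * A ^+ 2))).
  apply: ler_sum => i _; have := sqr_ge0 (x ord0 i * B - y ord0 i * A); nra.
rewrite big_split /= -!mulr_suml -!sqr_enorm -/A -/B; nra.
Qed.

Lemma enormD x y : enorm (x + y) <= enorm x + enorm y.
Proof.
rewrite -(ger0_norm (addr_ge0 (enorm_ge0 x) (enorm_ge0 y))) -sqrtr_sqr.
rewrite {1}/enorm ler_wsqrtr //.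
rewrite (eq_bigr (fun i => x ord0 i ^+ 2 + y ord0 i ^+ 2 + 2 * (x ord0 i * y ord0 i)));
  last by move=> i _; rewrite mxE sqrrD; ring.
rewrite !big_split /= -mulr_sumr -!sqr_enorm.
have := enorm_CauchySchwarz x y; nra.
Qed.

Lemma enorm_distD x y z : enorm (x - z) <= enorm (x - y) + enorm (y - z).
Proof. by have := enormD (x - y) (y - z); rewrite addrA subrK. Qed.

Lemma ler_enorm_dist_dist x y z :
  `|enorm (x - y) - enorm (x - z)| <= enorm (y - z).
Proof.
have := enorm_distD x z y; have := enorm_distD x y z.
by rewrite [enorm (z - y)]enorm_distC ler_norml => ? ?; apply/andP; split; lra.
Qed.

Lemma coord_le_enorm x i : `|x ord0 i| <= enorm x.
Proof.
rewrite -sqrtr_sqr /enorm ler_sqrt ?sumr_ge0 // => [|j _]; last exact: sqr_ge0.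
by rewrite (bigD1 i) //= lerDl sumr_ge0 // => j _; rewrite sqr_ge0.
Qed.

Lemma coord_le_mx_norm x i : `|x ord0 i| <= `|x|.
Proof.
change (`|x ord0 i| <= mx_norm x); rewrite mx_normrE.
exact: (le_bigmax _ (fun ij : 'I_1 * 'I_d => `|x ij.1 ij.2|) (ord0, i)).
Qed.

Lemma mx_norm_le_enorm x : `|x| <= enorm x.
Proof.
change (mx_norm x <= enorm x); rewrite mx_normrE bigmax_le ?enorm_ge0 //.
by move=> [i j] _ /=; rewrite (ord1 i) coord_le_enorm.
Qed.

Lemma enorm_le_mx_norm x : enorm x <= d.+1%:R * `|x|.
Proof.
rewrite -(ger0_norm (mulr_ge0 (ler0n _ _) (normr_ge0 x))) -sqrtr_sqr /enorm.
rewrite ler_wsqrtr // (@le_trans _ _ (\sum_(i < d) `|x| ^+ 2)) //.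
  apply: ler_sum => i _; rewrite -real_normK ?num_real //.
  by rewrite lerXn2r ?nnegrE // coord_le_mx_norm.
rewrite sumr_const card_ord exprMn -[_ *+ d]mulr_natl ler_wpM2r ?sqr_ge0 //.
by rewrite -natrX ler_nat (leq_trans (leqnSn d)) // expnS leq_pmulr.
Qed.

End EuclideanNorm.

Section EuclideanTopology.
Variables (R : realType) (d : nat).
Local Notation V := 'rV[R]_d.
Implicit Types (x y z : V) (A P : set V).

Lemma nbhs_enormP y P :
  nbhs y P <-> exists2 e, 0 < e & forall z, enorm (y - z) < e -> P z.
Proof.
split=> [/nbhs_ballP[e e0 yeP] | [e e0 yeP]].
  exists e => // z yz; apply: yeP; rewrite -ball_normE /=.
  exact: le_lt_trans (mx_norm_le_enorm _) yz.
apply/nbhs_ballP; exists (e / d.+1%:R) => [|z]; first by rewrite /= divr_gt0.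
rewrite -ball_normE /= => yz; apply/yeP/(le_lt_trans (enorm_le_mx_norm _)).
by rewrite mulrC -ltr_pdivlMr.
Qed.

Lemma closure_enormP A y :
  closure A y <-> forall e, 0 < e -> exists2 z, A z & enorm (y - z) < e.
Proof.
split=> [yA e e0 | yA B /nbhs_enormP[e e0 yeB]].
  have /yA[z [Az yz]] : nbhs y [set z | enorm (y - z) < e].
    by apply/nbhs_enormP; exists e.
  by exists z.
by have [z Az yz] := yA e e0; exists z; split => //; apply: yeB.
Qed.

Lemma continuous_enorm_dist y : continuous (fun z => enorm (y - z)).
Proof.
move=> z; apply/(@cvgrPdist_lt _ _ _ (nbhs z) (nbhs_filter z)) => e e0.
apply/nbhs_enormP; exists e => // t zt.
exact: le_lt_trans (ler_enorm_dist_dist _ _ _) zt.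
Qed.

Lemma exists_nearest A y : closed A -> A !=set0 ->
  exists2 c, A c & forall a, A a -> enorm (y - c) <= enorm (y - a).
Proof.
move=> cA [a0 Aa0]; set rho := enorm (y - a0).
pose K := A `&` closed_ball_ Num.norm y rho.
have Ka0 : K a0 by split; last exact: mx_norm_le_enorm.
have cK : compact K.
  apply: bounded_closed_compact; last first.
    by apply: closedI => //; exact: closed_closed_ball_.
  exists (`|y| + rho); split; first exact: num_real.
  move=> M ltM t [_ /= yt]; apply: le_trans _ (ltW ltM).
  rewrite -[t in leLHS](subrK y); apply: le_trans (ler_normD _ _) _.
  by rewrite addrC lerD2l distrC.
have [|c /set_mem[Ac _] cmin] :=
    @EVT_min_rV R d (fun t => enorm (y - t)) K (ex_intro _ a0 Ka0) cK.
  by apply: continuous_subspaceT; exact: continuous_enorm_dist.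
exists c => // a Aa; have [ya_le | ya_gt] := boolP (`|y - a| <= rho).
  exact/cmin/mem_set.
apply: le_trans (cmin _ (mem_set Ka0)) _; rewrite -/rho.
by apply: (le_trans (ltW _) (mx_norm_le_enorm _)); rewrite ltNge.
Qed.

End EuclideanTopology.

Section ParallelSets.
Variables (R : realType) (d : nat) (r : R) (E : set 'rV[R]_d).
Implicit Types (a c v x y : 'rV[R]_d) (K : set 'rV[R]_d).

Lemma rconeP K a x :
  rcone r K a x <-> forall v, K v -> r <= enorm (x - (a + r *: v)).
Proof.
split=> xK v Kv; first by rewrite leNgt; exact/negP/(xK v Kv).
by apply/negP; rewrite -leNgt xK.
Qed.

Lemma normalsP a v : normals r E a v <-> sphere v /\ nbhd_ge r E (a + r *: v).
Proof.
split=> -[sv Ev]; split=> //.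
  move=> z Ez; rewrite leNgt enorm_distC; apply/negP => zv.
  by have : (E `&` eball r (a + r *: v)) z by []; rewrite Ev.
apply/seteqP; split=> // z [Ez]; rewrite /eball /= enorm_distC ltNge.
by rewrite Ev.
Qed.

Lemma open_nbhd_lt : open (nbhd_lt r E).
Proof.
rewrite openE => x [a Ea xa]; apply/nbhs_enormP.
exists (r - enorm (x - a)) => [|z xz]; first by rewrite subr_gt0.
exists a => //; have := enorm_distD z x a.
rewrite [enorm (z - x)]enorm_distC; lra.
Qed.

Lemma bdry_nbhd_lt : bdry (nbhd_lt r E) = closure (nbhd_lt r E) `&` nbhd_ge r E.
Proof.
rewrite /bdry (interior_id _).1; last exact: open_nbhd_lt.
apply/seteqP; split=> y [yE yn]; split=> //.
  by move=> a Ea; rewrite leNgt; apply/negP => ya; apply: yn; exists a.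
by move=> [a Ea]; rewrite ltNge yn.
Qed.

Lemma nbhd_ge_nearest_bdry y c :
  0 < r -> E c -> enorm (y - c) = r -> nbhd_ge r E y -> bdry E c.
Proof.
move=> r0 Ec yc yE; split; first exact: subset_closure.
move/nbhs_enormP => [e e0 ceE].
(* The point at distance [s r < e] from [c] towards [y] lies in [E], yet is closer
   than [r] to [y]. *)
pose s := e / (e + r).
have s0 : 0 < s by rewrite divr_gt0 // addr_gt0.
have s1 : s < 1 by rewrite ltr_pdivrMr ?addr_gt0 // mul1r; lra.
have sr : s * r < e by rewrite mulrAC ltr_pdivrMr ?addr_gt0 // mulrDr; nra.
have /yE : E (c + s *: (y - c)).
  apply: ceE; have -> : c - (c + s *: (y - c)) = - (s *: (y - c)) by rewrite opprD addNKr.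
  by rewrite enormN enormZ gtr0_norm // yc.
have -> : y - (c + s *: (y - c)) = (1 - s) *: (y - c).
  by rewrite scalerBl scale1r opprD addrA.
rewrite enormZ gtr0_norm ?subr_gt0 // yc; nra.
Qed.

Hypothesis closedE : closed E.

Lemma bdry_nbhd_lt_nearest y :
  bdry (nbhd_lt r E) y -> exists2 c, E c & enorm (y - c) = r.
Proof.
rewrite bdry_nbhd_lt => -[/closure_enormP yE yge].
have [_ [a Ea _] _] := yE 1 ltr01.
have [c Ec cmin] := exists_nearest y closedE (ex_intro _ a Ea).
exists c => //; apply/eqP; rewrite eq_le yge // andbT.
apply/ler_addgt0Pr => e /yE[z [b Eb zb] yz].
apply: le_trans (cmin _ Eb) _; have := enorm_distD y z b; lra.
Qed.

End ParallelSets.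

Section NormalPoints.
Variables (R : realType) (d : nat) (r : R) (E : set 'rV[R]_d).
Hypotheses (r_gt0 : 0 < r) (closedE : closed E).
Implicit Types (a c v y : 'rV[R]_d).

Lemma normal_point_bdry_nbhd_lt a v :
  E a -> normals r E a v -> bdry (nbhd_lt r E) (a + r *: v).
Proof.
move=> Ea /normalsP[sv yE]; rewrite bdry_nbhd_lt; split=> //.
have v1 : enorm v = 1 by [].
apply/closure_enormP => e e0; pose m := Num.min e r.
have m0 : 0 < m by rewrite lt_min e0 r_gt0.
have me : m <= e by rewrite ge_min lexx.
have mr : m <= r by rewrite ge_min lexx orbT.
exists (a + (r - m / 2) *: v).
  by exists a => //; rewrite addrAC subrr add0r enormZ v1 mulr1 ger0_norm; lra.
rewrite opprD addrA (addrC a) addrK -scalerBl enormZ v1 mulr1 ger0_norm; lra.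
Qed.

Lemma bdry_nbhd_lt_normal_point y : bdry (nbhd_lt r E) y ->
  exists c v, [/\ bdry E c, normals r E c v & y = c + r *: v].
Proof.
move=> yb; have [c Ec yc] := bdry_nbhd_lt_nearest closedE yb.
have yE : nbhd_ge r E y by move: yb; rewrite bdry_nbhd_lt => -[].
pose v := r^-1 *: (y - c).
have yv : y = c + r *: v.
  by rewrite /v scalerA mulfV ?gt_eqF // scale1r addrC subrK.
exists c, v; split=> //; first exact: nbhd_ge_nearest_bdry yc yE.
apply/normalsP; split; last by rewrite -yv.
by rewrite /sphere /= /v enormZ gtr0_norm ?invr_gt0 // yc mulVf ?gt_eqF.
Qed.

End NormalPoints.

Theorem mainTheorem11 (R : realType) (d : nat) (r : R) (E : set 'rV[R]_d) :
  0 < r -> body E -> supported r E ->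
  \bigcap_(a in bdry E) rcone r (normals r E a) a
  = nbhd_ge r (bdry (nbhd_lt r E)).
Proof.
move=> r0 [_ cE] _; rewrite eqEsubset; split=> x xE.
  move=> y /(bdry_nbhd_lt_normal_point r0 cE)[c [v [cb cv ->]]].
  by have /rconeP := xE c cb; apply.
move=> a ab; apply/rconeP => v av; apply: xE.
by apply: normal_point_bdry_nbhd_lt => //; rewrite (closure_id E).1 //; case: ab.
Qed.
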